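(* Let $X$ be a prelength space and $Y$ a metric space. The function $\mathrm{ap}:\mathfrak{C}(X\to Y)\to(\mathfrak{C}(X)\to\mathfrak{C}(Y))$ is uniformly continuous with modulus $\lambda\varepsilon.\varepsilon$; that is, whenever $B'_\varepsilon(f_1,f_2)$ holds in $\mathfrak{C}(X\to Y)$, then $B'_\varepsilon(\mathrm{ap}(f_1)(x),\mathrm{ap}(f_2)(x))$ holds for every $x\in\mathfrak{C}(X)$.
   Context: $\mathbb{Q}^+$ denotes the strictly positive rationals; all $\varepsilon,\delta$ (with indices) range over $\mathbb{Q}^+$. A metric space is a triple $(X,\asymp,B)$ where $\asymp$ is an equivalence relation on $X$ and $B$ assigns to each $\varepsilon\in\mathbb{Q}^+$ a binary relation $B_\varepsilon$ on $X$ respecting $\asymp$, such that: (1) each $B_\varepsilon$ is reflexive; (2) each $B_\varepsilon$ is symmetric; (3) if $B_{\varepsilon_1}(a,b)$ and $B_{\varepsilon_2}(b,c)$ then $B_{\varepsilon_1+\varepsilon_2}(a,c)$; (4) if $B_{\varepsilon+\delta}(a,b)$ for all $\delta$, then $B_\varepsilon(a,b)$; (5) if $B_\varepsilon(a,b)$ for all $\varepsilon$, then $a\asymp b$. A prelength space is a metric space such that for all $a,b,\varepsilon,\delta_1,\delta_2$ with $\varepsilon<\delta_1+\delta_2$ and $B_\varepsilon(a,b)$ there exists $c$ with $B_{\delta_1}(a,c)$ and $B_{\delta_2}(c,b)$. A regular function over a metric space $W$ is a function $x:\mathbb{Q}^+\to W$ such that $B_{\varepsilon_1+\varepsilon_2}(x(\varepsilon_1),x(\varepsilon_2))$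 for all $\varepsilon_1,\varepsilon_2$; $\mathfrak{C}(W)$ is the metric space of regular functions with $x\asymp y$ iff $B_{2\varepsilon}(x(\varepsilon),y(\varepsilon))$ for all $\varepsilon$ and $B'_\varepsilon(x,y)$ iff $B_{\varepsilon+\delta_1+\delta_2}(x(\delta_1),y(\delta_2))$ for all $\delta_1,\delta_2$. A uniformly continuous function $g:X\to Y$ is a pair of a function and a modulus $\mu_g$ with $B^X_{\mu_g(\varepsilon)}(x_1,x_2)\Rightarrow B^Y_\varepsilon(g(x_1),g(x_2))$. For metric spaces $U,V$, $U\to V$ is the metric space of uniformly continuous functions with $B_\varepsilon(g,h)$ iff $B^V_\varepsilon(g(a),h(a))$ for all $a\in U$, and $g\asymp h$ iff $g(a)\asymp h(a)$ for all $a$. $\mathrm{map}(g)(x)=\lambda\varepsilon.\,g(x(\mu_g(\varepsilon)))$, and for $f\in\mathfrak{C}(X\to Y)$, $\mathrm{ap}(f)(x)=\lambda\varepsilon.\,\mathrm{map}(f(\tfrac{\varepsilon}{2}))(x)(\tfrac{\varepsilon}{2})$. *)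

From mathcomp Require Import all_boot all_order all_algebra.
Set Implicit Arguments. Unset Strict Implicit. Unset Printing Implicit Defensive.
Import Order.TTheory GRing.Theory Num.Theory.
Local Open Scope ring_scope.

Record Qpos := mkQpos { qval :> rat; qval_gt0 : 0 < qval }.

Definition Qpos_add (a b : Qpos) : Qpos :=
  @mkQpos (qval a + qval b) (addr_gt0 (qval_gt0 a) (qval_gt0 b)).

Lemma Qpos_half_gt0 (a : Qpos) : 0 < qval a / 2.
Proof. by rewrite divr_gt0 ?qval_gt0. Qed.

Definition Qpos_half (a : Qpos) : Qpos := @mkQpos (qval a / 2) (Qpos_half_gt0 a).

Definition Qpos_lt (a b : Qpos) : Prop := qval a < qval b.

Declare Scope qpos_scope.
Delimit Scope qpos_scope with Qp.
Notation "a + b" := (Qpos_add a b) : qpos_scope.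

Record MetricSpace := {
  ms_car :> Type;
  meq : ms_car -> ms_car -> Prop;
  ball : Qpos -> ms_car -> ms_car -> Prop;
  meq_refl : forall a, meq a a;
  meq_sym : forall a b, meq a b -> meq b a;
  meq_trans : forall a b c, meq a b -> meq b c -> meq a c;
  ball_resp : forall e a a' b b', meq a a' -> meq b b' -> ball e a b -> ball e a' b';
  ball_refl : forall e a, ball e a a;
  ball_sym : forall e a b, ball e a b -> ball e b a;
  ball_triangle : forall e1 e2 a b c,
      ball e1 a b -> ball e2 b c -> ball (e1 + e2)%Qp a c;
  ball_closed : forall e a b, (forall d, ball (e + d)%Qp a b) -> ball e a b;
  ball_eq : forall a b, (forall e, ball e a b) -> meq a b
}.

Definition prelength (X : MetricSpace) : Prop :=
  forall (a b : X) (e d1 d2 : Qpos), Qpos_lt e (d1 + d2)%Qp -> ball e a b ->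
    exists c : X, ball d1 a c /\ ball d2 c b.

Definition is_regular (T : Type) (B : Qpos -> T -> T -> Prop) (x : Qpos -> T) : Prop :=
  forall e1 e2 : Qpos, B (e1 + e2)%Qp (x e1) (x e2).

Definition ballC (T : Type) (B : Qpos -> T -> T -> Prop) (e : Qpos) (x y : Qpos -> T) : Prop :=
  forall d1 d2 : Qpos, B (e + d1 + d2)%Qp (x d1) (y d2).

Record ucfun (X Y : MetricSpace) := {
  ucf :> X -> Y;
  ucmod : Qpos -> Qpos;
  ucf_prop : forall (e : Qpos) (a b : X), ball (ucmod e) a b -> ball e (ucf a) (ucf b)
}.

Definition ballF (X Y : MetricSpace) (e : Qpos) (g h : ucfun X Y) : Prop :=
  forall a : X, ball e (g a) (h a).

Definition cmap (X Y : MetricSpace) (g : ucfun X Y) (x : Qpos -> X) : Qpos -> Y :=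
  fun e => g (x (ucmod g e)).

Definition cap (X Y : MetricSpace) (f : Qpos -> ucfun X Y) (x : Qpos -> X) : Qpos -> Y :=
  fun e => cmap (f (Qpos_half e)) x (Qpos_half e).

From mathcomp Require Import all_boot all_order all_algebra.
From mathcomp Require Import lra.
Import Order.TTheory GRing.Theory Num.Theory.
Local Open Scope ring_scope.

(* [ap f1 x d1] is [f1 (d1/2)] applied to [x m1], with [m1] the modulus of
   [f1 (d1/2)] at [d1/2]; likewise for [f2], [d2] and [m2].  Since
   [B (m1 + m2) (x m1) (x m2)], the prelength property gives a chain
   [x m1 -- c -- c' -- x m2] of hops [m1], [nu], [m2], where [nu] is the
   modulus of [f1 (d1/2)] at an arbitrary slack [g].  Then
   [f1 (d1/2) (x m1) -- f1 (d1/2) c -- f1 (d1/2) c' -- f2 (d2/2) c' -- f2 (d2/2) (x m2)]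
   has length [d1/2 + g + (e + d1/2 + d2/2) + d2/2 = e + d1 + d2 + g],
   and closedness of balls removes [g]. *)

Lemma qval_inj : injective qval.
Proof.
case=> [a Ha] [b Hb] /= eq_ab; subst b.
by rewrite (eq_irrelevance Ha Hb).
Qed.

Lemma ball_le (X : MetricSpace) (e e' : Qpos) (a b : X) :
  qval e <= qval e' -> ball e a b -> ball e' a b.
Proof.
rewrite le_eqVlt => /orP [/eqP /qval_inj <- //|lt_ee'] Bab.
have gap_gt0 : 0 < qval e' - qval e by rewrite subr_gt0.
have -> : e' = (e + mkQpos gap_gt0)%Qp by apply: qval_inj => /=; lra.
exact: ball_triangle Bab (ball_refl _ b).
Qed.

Lemma prelength_split3 {X : MetricSpace} (HX : prelength X) (d2 : Qpos)
    {a b : X} {d1 d3 : Qpos} :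
  ball (d1 + d3)%Qp a b ->
  exists c c' : X, [/\ ball d1 a c, ball d2 c c' & ball d3 c' b].
Proof.
move=> Bab; have d2_gt0 := qval_gt0 d2.
have [c [Bac Bcb]] : exists c, ball d1 a c /\ ball (d3 + Qpos_half d2)%Qp c b.
  by apply: HX Bab; rewrite /Qpos_lt /=; lra.
have [c' [Bcc' Bc'b]] : exists c', ball d2 c c' /\ ball d3 c' b.
  by apply: HX Bcb; rewrite /Qpos_lt /=; lra.
by exists c, c'.
Qed.

Theorem theorem28 (X Y : MetricSpace) (HX : prelength X)
  (f1 f2 : Qpos -> ucfun X Y)
  (Hf1 : is_regular (@ballF X Y) f1) (Hf2 : is_regular (@ballF X Y) f2)
  (e : Qpos) :
  ballC (@ballF X Y) e f1 f2 ->
  forall x : Qpos -> X, is_regular (@ball X) x ->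
    ballC (@ball Y) e (cap f1 x) (cap f2 x).
Proof.
move=> Bf12 x Hx d1 d2; apply: ball_closed => g.
set g1 := f1 (Qpos_half d1); set g2 := f2 (Qpos_half d2).
have [c [c' [Bc Bcc' Bc']]] :=
  prelength_split3 HX (ucmod g1 g) (Hx (ucmod g1 (Qpos_half d1)) (ucmod g2 (Qpos_half d2))).
have := ball_triangle (ball_triangle (ball_triangle
          (ucf_prop Bc) (ucf_prop Bcc')) (Bf12 _ _ c')) (ucf_prop Bc').
by apply: ball_le => /=; lra.
Qed.
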